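(* Let $V$ be countably infinite, $\psi:K_V\to\mathbb N$ a fixed bijection, $G_0\in\mathscr{G}_0(V)\cup\mathscr{G}_1(V)$, $\varphi\in\ell^1_+(K_V)$, and $f(G):=d_\varphi(G_0,G)$. The following are equivalent: (1) the limit $c_\varphi := \lim_{n\to\infty}2^n\varphi(\psi^{-1}(n))$ exists; (2) $f'(G)$ exists for some $G\in\mathscr{G}(V)\setminus\{\emptyset,K_V\}$ with $G\Delta G_0\in\mathscr{G}_0(V)\cup\mathscr{G}_1(V)$. In this case $f'(G)$ exists for every $G\in\mathscr{G}(V)\setminus\{\emptyset,K_V\}$ with $G\Delta G_0\in\mathscr{G}_0(V)\cup\mathscr{G}_1(V)$, and $f'(G) = c_\varphi$ if $G, G\Delta G_0$ both lie in $\mathscr{G}_0(V)$ or both lie in $\mathscr{G}_1(V)$, while $f'(G) = -c_\varphi$ if $(G, G\Delta G_0)\in\mathscr{G}_i(V)\times\mathscr{G}_{1-i}(V)$ for some $i\in\{0,1\}$.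
   Context: $K_V$ is the set of $2$-element subsets of $V$; $\mathscr{G}(V)$ is the set of simple graphs on $V$ identified with their edge sets, with the product topology of $\{0,1\}^{K_V}$; $\mathscr{G}_0(V)$, $\mathscr{G}_1(V)$ are the graphs with finitely, resp. co-finitely, many edges; $\mathscr{G}'(V):=\mathscr{G}(V)\setminus(\mathscr{G}_0(V)\cup\mathscr{G}_1(V))$. $\ell^1_+(K_V)$ is the set of $\varphi:K_V\to(0,\infty)$ with $\sum_e\varphi(e)<\infty$, and $d_\varphi(G_1,G_2):=\sum_{e\in G_1\Delta G_2}\varphi(e)$. $\mathbb N=\{1,2,\dots\}$, $\|G\|_{\psi,2}:=\sum_{e\in G}2^{-\psi(e)}$. For $f:\mathscr{G}(V)\to\mathbb R$ and $G\ne\emptyset,K_V$, $f'(G) := \lim_{G_1\to G,\ G_1\in\mathscr{G}'(V)\setminus\{G\}} \frac{f(G_1)-f(G)}{\|G_1\|_{\psi,2}-\|G\|_{\psi,2}}$ (limit in the product topology) if it exists. *)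

From Stdlib Require Import Reals Lra List ClassicalEpsilon.
Open Scope R_scope.

Definition countably_infinite (V : Type) : Prop :=
  exists g : nat -> V, (forall m n, g m = g n -> m = n) /\ (forall v, exists n, g n = v).

Definition is_two_subset {V : Type} (S : V -> Prop) : Prop :=
  exists x y : V, x <> y /\ forall z, S z <-> (z = x \/ z = y).
Definition edge (V : Type) : Type := {S : V -> Prop | is_two_subset S}.

(* simple graphs on V, identified with their edge sets *)
Definition graph (V : Type) : Type := edge V -> Prop.

Definition finite_set {T : Type} (P : T -> Prop) : Prop :=
  exists l : list T, forall x, P x -> In x l.

(* G_0(V): finitely many edges;  G_1(V): co-finitely many edges *)
Definition fin_graph {V : Type} (G : graph V) : Prop := finite_set G.
Definition cofin_graph {V : Type} (G : graph V) : Prop := finite_set (fun e => ~ G e).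
Definition gprime {V : Type} (G : graph V) : Prop := ~ fin_graph G /\ ~ cofin_graph G.

Definition nonempty_graph {V : Type} (G : graph V) : Prop := exists e, G e.
Definition nonfull_graph {V : Type} (G : graph V) : Prop := exists e, ~ G e.

Definition symdiff {V : Type} (G H : graph V) : graph V :=
  fun e => (G e /\ ~ H e) \/ (H e /\ ~ G e).

(* unordered sums of nonnegative families: supremum of finite subsums *)
Fixpoint list_sum {T : Type} (w : T -> R) (l : list T) : R :=
  match l with nil => 0 | x :: l' => w x + list_sum w l' end.

Definition finite_subsum {T : Type} (w : T -> R) (P : T -> Prop) (s : R) : Prop :=
  exists l : list T, NoDup l /\ Forall P l /\ s = list_sum w l.

Definition set_sum {T : Type} (w : T -> R) (P : T -> Prop) : R :=
  epsilon (inhabits 0) (fun s => is_lub (finite_subsum w P) s).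

Definition l1_plus {V : Type} (phi : edge V -> R) : Prop :=
  (forall e, 0 < phi e) /\ bound (finite_subsum phi (fun _ => True)).

Definition d_phi {V : Type} (phi : edge V -> R) (G1 G2 : graph V) : R :=
  set_sum phi (symdiff G1 G2).

Definition psi_bijection {V : Type} (psi : edge V -> nat) : Prop :=
  (forall e1 e2, psi e1 = psi e2 -> e1 = e2) /\
  (forall e, (1 <= psi e)%nat) /\
  (forall n, (1 <= n)%nat -> exists e, psi e = n).

Definition norm_psi2 {V : Type} (psi : edge V -> nat) (G : graph V) : R :=
  set_sum (fun e => / 2 ^ (psi e)) G.

(* f'(G) = L : limit in the product topology over G1 in G'(V) \ {G}.
   Basic neighbourhoods of G: graphs agreeing with G on a finite list of edges. *)
Definition has_deriv {V : Type} (psi : edge V -> nat) (f : graph V -> R)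
    (G : graph V) (L : R) : Prop :=
  forall eps, 0 < eps ->
    exists l : list (edge V),
      forall G1 : graph V,
        gprime G1 ->
        ~ (forall e, G1 e <-> G e) ->
        (forall e, In e l -> (G1 e <-> G e)) ->
        Rabs ((f G1 - f G) / (norm_psi2 psi G1 - norm_psi2 psi G) - L) < eps.

Definition psi_limit {V : Type} (psi : edge V -> nat) (phi : edge V -> R) (c : R) : Prop :=
  forall eps, 0 < eps ->
    exists N : nat, forall (n : nat) (e : edge V), (N <= n)%nat -> psi e = n ->
      Rabs (2 ^ n * phi e - c) < eps.

From Pilot Require Import Defs.
From Stdlib Require Import Reals List.
From Stdlib Require Import Lra Lia Classical ClassicalEpsilon.
Open Scope R_scope.

(* Both G and G Δ G0 are eventually constant along the enumeration psi, being finite or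
   cofinite.  A graph G1 close to G in the product topology differs from G only on a set
   S of edges of large index, where toggling an edge changes d_phi(G0, .) by +-phi(e) and
   ||.||_{psi,2} by +-2^{-psi(e)}, with signs fixed by these tails.  The difference
   quotient is therefore +-(sum_S phi)/(sum_S 2^{-psi}), an average of the ratios
   2^{psi(e)} phi(e) over S, which tends to +-c_phi when that limit exists.  Conversely,
   for S = {e} together with all even-indexed edges of index > M, G1 lies in G'(V) and,
   for M large, the quotient is as close as we like to +-2^{psi(e)} phi(e); so the
   derivative forces the limit. *)

Definition max_index {T : Type} (ps : T -> nat) (l : list T) : nat :=
  fold_right (fun x m => Nat.max (ps x) m) 0%nat l.

Lemma le_max_index {T : Type} (ps : T -> nat) l x : In x l -> (ps x <= max_index ps l)%nat.
Proof.
  induction l as [|y l IH]; simpl; intros Hx; [contradiction|].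
  destruct Hx as [<-|Hx]; [lia|specialize (IH Hx); lia].
Qed.

Section SetSum.
Context {T : Type} (w : T -> R).

Lemma list_sum_app (l1 l2 : list T) :
  Defs.list_sum w (l1 ++ l2) = Defs.list_sum w l1 + Defs.list_sum w l2.
Proof. induction l1; simpl; [lra|rewrite IHl1; lra]. Qed.

Lemma list_sum_map {U : Type} (f : U -> T) (l : list U) :
  Defs.list_sum w (map f l) = Defs.list_sum (fun x => w (f x)) l.
Proof. induction l; simpl; [reflexivity|now rewrite IHl]. Qed.

Hypothesis w_pos : forall x, 0 < w x.

Lemma list_sum_nonneg (l : list T) : 0 <= Defs.list_sum w l.
Proof. induction l as [|x l IH]; simpl; [lra|pose proof (w_pos x); lra]. Qed.

Lemma list_sum_incl (l m : list T) :
  NoDup l -> incl l m -> Defs.list_sum w l <= Defs.list_sum w m.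
Proof.
  revert m; induction l as [|x l IH]; intros m Hnd Hincl; simpl.
  - apply list_sum_nonneg.
  - destruct (in_split x m (Hincl x (in_eq x l))) as [m1 [m2 ->]].
    inversion Hnd as [|? ? Hx Hnd']; subst.
    assert (Hincl' : incl l (m1 ++ m2)).
    { intros y Hy. specialize (Hincl y (in_cons x y l Hy)).
      apply in_app_or in Hincl; apply in_or_app.
      destruct Hincl as [H|[<-|H]]; tauto. }
    specialize (IH _ Hnd' Hincl'). rewrite !list_sum_app in *. simpl. lra.
Qed.

Lemma list_sum_split (P Q : T -> Prop) (l : list T) :
  NoDup l -> Forall (fun x => P x \/ Q x) l ->
  exists l1 l2, NoDup l1 /\ NoDup l2 /\ Forall P l1 /\ Forall Q l2 /\
    incl l1 l /\ incl l2 l /\ Defs.list_sum w l = Defs.list_sum w l1 + Defs.list_sum w l2.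
Proof.
  induction l as [|x l IH]; intros Hnd HPQ.
  - exists nil, nil. repeat split; try constructor; try apply incl_nil_l. simpl; lra.
  - inversion Hnd as [|? ? Hx Hnd']; inversion HPQ as [|? ? Hxy HPQ']; subst.
    destruct (IH Hnd' HPQ') as [l1 [l2 [Hnd1 [Hnd2 [HP [HQ [Hi1 [Hi2 E]]]]]]]].
    destruct Hxy as [Px|Qx].
    + exists (x :: l1), l2. repeat split; auto.
      * constructor; [intros H; exact (Hx (Hi1 x H))|auto].
      * exact (incl_cons (in_eq x l) (incl_tl x Hi1)).
      * exact (incl_tl x Hi2).
      * simpl; lra.
    + exists l1, (x :: l2). repeat split; auto.
      * constructor; [intros H; exact (Hx (Hi2 x H))|auto].
      * exact (incl_tl x Hi1).
      * exact (incl_cons (in_eq x l) (incl_tl x Hi2)).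
      * simpl; lra.
Qed.

Hypothesis w_summable : bound (finite_subsum w (fun _ => True)).

Lemma set_sum_lub (P : T -> Prop) : is_lub (finite_subsum w P) (set_sum w P).
Proof.
  unfold set_sum. apply epsilon_spec.
  assert (Hbound : bound (finite_subsum w P)).
  { destruct w_summable as [M HM]. exists M. intros s [l [Hnd [_ ->]]]. apply HM.
    exists l; repeat split; auto. apply Forall_forall; auto. }
  destruct (completeness _ Hbound) as [m Hm].
  - exists 0, nil. repeat split; constructor.
  - exists m; exact Hm.
Qed.

Lemma set_sum_ge (P : T -> Prop) l :
  NoDup l -> Forall P l -> Defs.list_sum w l <= set_sum w P.
Proof. intros. apply (proj1 (set_sum_lub P)). exists l; auto. Qed.

Lemma set_sum_le (P : T -> Prop) M :
  (forall l, NoDup l -> Forall P l -> Defs.list_sum w l <= M) -> set_sum w P <= M.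
Proof. intros H. apply (proj2 (set_sum_lub P)). intros s [l [Hnd [HP ->]]]. auto. Qed.

Lemma set_sum_nonneg (P : T -> Prop) : 0 <= set_sum w P.
Proof. apply (set_sum_ge P nil); constructor. Qed.

Lemma set_sum_mono (P Q : T -> Prop) :
  (forall x, P x -> Q x) -> set_sum w P <= set_sum w Q.
Proof.
  intros H. apply set_sum_le. intros l Hnd HP. apply set_sum_ge; auto.
  eapply Forall_impl; eauto.
Qed.

Lemma set_sum_ext (P Q : T -> Prop) :
  (forall x, P x <-> Q x) -> set_sum w P = set_sum w Q.
Proof. intros H. apply Rle_antisym; apply set_sum_mono; firstorder. Qed.

Lemma set_sum_pos (P : T -> Prop) a : P a -> 0 < set_sum w P.
Proof.
  intros Pa. apply Rlt_le_trans with (Defs.list_sum w (a :: nil)).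
  - simpl. pose proof (w_pos a); lra.
  - apply set_sum_ge; repeat constructor; auto.
Qed.

Lemma set_sum_single a : set_sum w (fun x => x = a) = w a.
Proof.
  replace (w a) with (Defs.list_sum w (a :: nil)) by (simpl; lra).
  apply Rle_antisym.
  - apply set_sum_le. intros l Hnd Ha. apply list_sum_incl; auto.
    intros x Hx. rewrite Forall_forall in Ha. rewrite (Ha x Hx). apply in_eq.
  - apply set_sum_ge; repeat constructor. intros [].
Qed.

Lemma set_sum_add (P Q PQ : T -> Prop) :
  (forall x, P x -> Q x -> False) -> (forall x, PQ x <-> P x \/ Q x) ->
  set_sum w PQ = set_sum w P + set_sum w Q.
Proof.
  intros Hdisj HPQ. apply Rle_antisym.
  - apply set_sum_le. intros l Hnd Hl.
    assert (Hl' : Forall (fun x => P x \/ Q x) l).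
    { eapply Forall_impl; [|exact Hl]. intros x; apply HPQ. }
    destruct (list_sum_split P Q l Hnd Hl') as [l1 [l2 [Hnd1 [Hnd2 [HP [HQ [_ [_ ->]]]]]]]].
    pose proof (set_sum_ge P l1 Hnd1 HP). pose proof (set_sum_ge Q l2 Hnd2 HQ). lra.
  - cut (set_sum w Q <= set_sum w PQ - set_sum w P); [lra|].
    apply set_sum_le. intros l2 Hnd2 HQ.
    cut (set_sum w P <= set_sum w PQ - Defs.list_sum w l2); [lra|].
    apply set_sum_le. intros l1 Hnd1 HP.
    cut (Defs.list_sum w (l1 ++ l2) <= set_sum w PQ); [rewrite list_sum_app; lra|].
    apply set_sum_ge.
    + apply NoDup_app; auto. intros x Hx1 Hx2.
      rewrite Forall_forall in HP, HQ. exact (Hdisj x (HP x Hx1) (HQ x Hx2)).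
    + apply Forall_app; split; (eapply Forall_impl; [|eassumption]);
        intros x Hx; apply HPQ; auto.
Qed.

Lemma set_sum_add_point (P : T -> Prop) a :
  ~ P a -> set_sum w (fun x => x = a \/ P x) = w a + set_sum w P.
Proof.
  intros Ha. rewrite (set_sum_add (fun x => x = a) P); [|intros x -> Px; auto|tauto].
  now rewrite set_sum_single.
Qed.

Lemma set_sum_tail_small (ps : T -> nat) d :
  0 < d -> exists M, set_sum w (fun x => (M < ps x)%nat) <= d.
Proof.
  intros Hd. set (s := set_sum w (fun _ => True)).
  assert (Hl : exists l, NoDup l /\ s - d < Defs.list_sum w l).
  { apply NNPP; intro H.
    assert (s <= s - d); [|lra].
    apply (proj2 (set_sum_lub (fun _ => True))). intros t [l [Hnd [_ ->]]].
    apply Rnot_lt_le. intro. apply H. eauto. }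
  destruct Hl as [l [Hnd Hl]].
  exists (max_index ps l).
  assert (Hs : s = set_sum w (fun x => (max_index ps l < ps x)%nat)
                 + set_sum w (fun x => ~ (max_index ps l < ps x)%nat)).
  { apply set_sum_add; [tauto|]. intros x; split; [intros _; apply classic|auto]. }
  assert (Defs.list_sum w l <= set_sum w (fun x => ~ (max_index ps l < ps x)%nat)).
  { apply set_sum_ge; auto. apply Forall_forall. intros x Hx.
    pose proof (le_max_index ps l x Hx). lia. }
  lra.
Qed.

End SetSum.

Lemma set_sum_le_scale {T : Type} (w v : T -> R)
  (w_summable : bound (finite_subsum w (fun _ => True)))
  (v_summable : bound (finite_subsum v (fun _ => True))) (P : T -> Prop) k :
  0 <= k -> (forall x, P x -> w x <= k * v x) -> set_sum w P <= k * set_sum v P.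
Proof.
  intros Hk H. apply (set_sum_le w w_summable). intros l Hnd HP.
  apply Rle_trans with (k * Defs.list_sum v l).
  - rewrite Forall_forall in HP. clear Hnd.
    induction l as [|x l IH]; simpl; [lra|].
    pose proof (H x (HP x (in_eq x l))).
    assert (Defs.list_sum w l <= k * Defs.list_sum v l)
      by (apply IH; intros; apply HP, in_cons; auto).
    lra.
  - apply Rmult_le_compat_l; [exact Hk|]. apply (set_sum_ge v v_summable); auto.
Qed.

Lemma set_sum_ge_scale {T : Type} (w v : T -> R)
  (w_summable : bound (finite_subsum w (fun _ => True)))
  (v_summable : bound (finite_subsum v (fun _ => True))) (P : T -> Prop) k :
  0 < k -> (forall x, P x -> k * v x <= w x) -> k * set_sum v P <= set_sum w P.
Proof.
  intros Hk H.
  assert (set_sum v P <= / k * set_sum w P).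
  { apply (set_sum_le_scale v w v_summable w_summable); [left; apply Rinv_0_lt_compat, Hk|].
    intros x Px. specialize (H x Px).
    apply (Rmult_le_reg_l k); [exact Hk|]. rewrite <- Rmult_assoc, Rinv_r; lra. }
  apply (Rmult_le_compat_l k) in H0; [|lra]. rewrite <- Rmult_assoc, Rinv_r in H0; lra.
Qed.

Lemma set_sum_ratio_near {T : Type} (w v : T -> R) (w_pos : forall x, 0 < w x)
  (v_pos : forall x, 0 < v x) (w_summable : bound (finite_subsum w (fun _ => True)))
  (v_summable : bound (finite_subsum v (fun _ => True))) (S : T -> Prop) a c eps :
  S a -> (forall x, S x -> Rabs (w x / v x - c) <= eps) ->
  Rabs (set_sum w S / set_sum v S - c) <= eps.
Proof.
  intros Sa Hnear.
  assert (Hv : 0 < set_sum v S) by exact (set_sum_pos v v_pos v_summable S a Sa).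
  assert (Hbounds : forall x, S x -> (c - eps) * v x <= w x <= (c + eps) * v x).
  { intros x Sx. pose proof (v_pos x).
    assert (c - eps <= w x / v x <= c + eps)
      by (specialize (Hnear x Sx); unfold Rabs in Hnear; destruct Rcase_abs in Hnear; lra).
    replace (w x) with (w x / v x * v x) by (field; lra).
    split; apply Rmult_le_compat_r; lra. }
  assert (Hup : set_sum w S <= (c + eps) * set_sum v S).
  { apply (set_sum_le_scale w v w_summable v_summable); [|apply Hbounds].
    destruct (Hbounds a Sa) as [_ Ha]. pose proof (w_pos a). pose proof (v_pos a). nra. }
  assert (Hlow : (c - eps) * set_sum v S <= set_sum w S).
  { destruct (Rle_lt_dec (c - eps) 0) as [Hneg|Hpos].
    - pose proof (set_sum_nonneg w w_summable S). nra.
    - apply (set_sum_ge_scale w v w_summable v_summable); [exact Hpos|apply Hbounds]. }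
  assert (Hq : set_sum w S = set_sum w S / set_sum v S * set_sum v S) by (field; lra).
  apply Rabs_le. split; nra.
Qed.

Lemma ratio_perturb_small p h eps :
  0 < h -> 0 <= p -> 0 < eps -> exists d, 0 < d /\
  forall a b, 0 <= a <= d -> 0 <= b <= d -> Rabs ((p + a) / (h + b) - p / h) <= eps.
Proof.
  intros Hh Hp Heps. exists (eps * h * h / (h + p)). split.
  - apply Rdiv_lt_0_compat; [|lra]. apply Rmult_lt_0_compat; [apply Rmult_lt_0_compat|]; lra.
  - intros a b [Ha0 Had] [Hb0 Hbd].
    set (d := eps * h * h / (h + p)) in *.
    assert (Hd : d * (h + p) = eps * h * h) by (unfold d; field; lra).
    assert (E : (p + a) / (h + b) - p / h = (a * h - p * b) / (h * (h + b))) by (field; lra).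
    rewrite E. set (D := h * (h + b)).
    assert (HD : h * h <= D) by (unfold D; nra).
    set (Z := (a * h - p * b) / D).
    assert (HZ : Z * D = a * h - p * b) by (unfold Z; field; unfold D; nra).
    assert (a * h + p * b <= eps * h * h) by nra.
    apply Rabs_le. split; apply (Rmult_le_reg_r D); nra.
Qed.

Definition signed (b : bool) (x : R) : R := if b then - x else x.

Lemma signed_div a b x y : signed a x / signed b y = signed (xorb a b) (x / y).
Proof.
  destruct a, b; simpl; unfold Rdiv; rewrite ?Rinv_opp; ring.
Qed.

Lemma Rabs_signed_sub b x y : Rabs (signed b x - y) = Rabs (x - signed b y).
Proof.
  destruct b; simpl; [|reflexivity].
  rewrite <- Rabs_Ropp. f_equal. ring.
Qed.

Lemma Rabs_signed_sub_signed b x y : Rabs (signed b x - signed b y) = Rabs (x - y).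
Proof. rewrite Rabs_signed_sub. destruct b; simpl; f_equal; ring. Qed.

Lemma sum_inv_pow2_seq K : forall s,
  Defs.list_sum (fun n => / 2 ^ n) (seq s K) = 2 / 2 ^ s - 2 / 2 ^ (s + K).
Proof.
  induction K as [|K IH]; intros s; simpl.
  - rewrite Nat.add_0_r; lra.
  - rewrite IH. replace (S s + K)%nat with (s + S K)%nat by lia.
    change (2 ^ S s) with (2 * 2 ^ s).
    field. split; apply pow_nonzero; lra.
Qed.

Section EdgeIndex.
Context {V : Type} (psi : edge V -> nat).

Definition psi_weight (e : edge V) : R := / 2 ^ psi e.

Lemma psi_weight_pos e : 0 < psi_weight e.
Proof. apply Rinv_0_lt_compat, pow_lt; lra. Qed.

Lemma psi_weight_summable :
  (forall e1 e2, psi e1 = psi e2 -> e1 = e2) ->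
  bound (finite_subsum psi_weight (fun _ => True)).
Proof.
  intros Hinj. exists 2. intros s [l [Hnd [_ ->]]].
  change (Defs.list_sum (fun e => / 2 ^ psi e) l <= 2).
  rewrite <- (list_sum_map (fun n => / 2 ^ n) psi).
  apply Rle_trans with (Defs.list_sum (fun n => / 2 ^ n) (seq 0 (S (max_index psi l)))).
  - apply list_sum_incl.
    + intros; apply Rinv_0_lt_compat, pow_lt; lra.
    + apply NoDup_map_NoDup_ForallPairs; auto. intros a b _ _; apply Hinj.
    + intros n Hn. apply in_map_iff in Hn. destruct Hn as [e [<- He]].
      apply in_seq. pose proof (le_max_index psi l e He). lia.
  - rewrite sum_inv_pow2_seq, pow_O, Rdiv_1_r.
    assert (0 < 2 / 2 ^ (0 + S (max_index psi l)))
      by (apply Rdiv_lt_0_compat; [lra|apply pow_lt; lra]).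
    lra.
Qed.

Lemma finite_psi_le : psi_bijection psi ->
  forall K, exists l, forall e, (psi e <= K)%nat -> In e l.
Proof.
  intros [Hinj [Hge1 Hsurj]]. induction K as [|K [l Hl]].
  - exists nil. intros e He. specialize (Hge1 e). lia.
  - destruct (Hsurj (S K)) as [e' He']; [lia|].
    exists (e' :: l). intros e He. destruct (Nat.eq_dec (psi e) (S K)).
    + left. apply Hinj. congruence.
    + right. apply Hl. lia.
Qed.

Lemma index_parity_unbounded : psi_bijection psi ->
  forall (b : bool) K, exists e, Nat.even (psi e) = b /\ (K < psi e)%nat.
Proof.
  intros [_ [_ Hsurj]] b K. destruct b.
  - destruct (Hsurj (2 * S K)%nat) as [e He]; [lia|].
    exists e. rewrite He. split; [apply Nat.even_even|lia].
  - destruct (Hsurj (2 * S K + 1)%nat) as [e He]; [lia|].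
    exists e. rewrite He. split; [apply Nat.even_odd|lia].
Qed.

Lemma infinite_of_unbounded (X : edge V -> Prop) :
  (forall K, exists e, X e /\ (K < psi e)%nat) -> ~ finite_set X.
Proof.
  intros H [l Hl]. destruct (H (max_index psi l)) as [e [Xe He]].
  pose proof (le_max_index psi l e (Hl e Xe)). lia.
Qed.

Definition const_beyond (P : graph V) (b : bool) (N : nat) : Prop :=
  forall e, (N < psi e)%nat -> (P e <-> b = true).

Definition eventually_const (P : graph V) (b : bool) : Prop :=
  exists N, const_beyond P b N.

Lemma const_beyond_mono P b N N' :
  const_beyond P b N -> (N <= N')%nat -> const_beyond P b N'.
Proof. intros H HN e He. apply H. lia. Qed.

Lemma const_beyond_common (P Q : graph V) b b' :
  eventually_const P b -> eventually_const Q b' ->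
  exists N, const_beyond P b N /\ const_beyond Q b' N.
Proof.
  intros [N1 HP] [N2 HQ]. exists (Nat.max N1 N2).
  split; [apply (const_beyond_mono P b N1)|apply (const_beyond_mono Q b' N2)]; auto; lia.
Qed.

Lemma eventually_const_of_fin (P : graph V) : fin_graph P -> eventually_const P false.
Proof.
  intros [l Hl]. exists (max_index psi l). intros e He. split; [|discriminate].
  intros Pe. pose proof (le_max_index psi l e (Hl e Pe)). lia.
Qed.

Lemma eventually_const_of_cofin (P : graph V) : cofin_graph P -> eventually_const P true.
Proof.
  intros [l Hl]. exists (max_index psi l). intros e He. split; [reflexivity|intros _].
  apply NNPP. intros nPe. pose proof (le_max_index psi l e (Hl e nPe)). lia.
Qed.

Lemma eventually_const_of_fin_or_cofin (P : graph V) :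
  fin_graph P \/ cofin_graph P -> exists b, eventually_const P b.
Proof.
  intros [H|H]; eexists; [apply eventually_const_of_fin|apply eventually_const_of_cofin]; exact H.
Qed.

Lemma eventually_const_of_symdiff (G G0 : graph V) bD b0 :
  eventually_const (symdiff G G0) bD -> eventually_const G0 b0 ->
  eventually_const G (xorb bD b0).
Proof.
  intros [N1 HD] [N2 H0]. exists (Nat.max N1 N2). intros e He.
  specialize (HD e ltac:(lia)). specialize (H0 e ltac:(lia)). unfold symdiff in HD.
  destruct bD, b0; simpl in *; destruct (classic (G e)), (classic (G0 e));
    intuition congruence.
Qed.

Lemma gprime_symdiff (G S : graph V) b N :
  const_beyond G b N ->
  (forall K, exists e, S e /\ (K < psi e)%nat) ->
  (forall K, exists e, ~ S e /\ (K < psi e)%nat) ->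
  gprime (symdiff G S).
Proof.
  intros HG Hin Hout.
  assert (Hbig : forall K X, (forall K, exists e, X e /\ (K < psi e)%nat) ->
            exists e, X e /\ (K < psi e)%nat /\ (G e <-> b = true)).
  { intros K X HX. destruct (HX (Nat.max K N)) as [e [Xe He]].
    exists e. repeat split; auto; try lia; apply HG; lia. }
  split; apply infinite_of_unbounded; intros K;
    destruct (Hbig K _ Hin) as [x [Sx [Kx Gx]]]; destruct (Hbig K _ Hout) as [y [Sy [Ky Gy]]];
    destruct b; [exists y|exists x|exists x|exists y]; unfold symdiff;
    split; auto; intuition congruence.
Qed.

Definition even_tail (M : nat) (e : edge V) : Prop :=
  (M < psi e)%nat /\ Nat.even (psi e) = true.

Lemma set_sum_even_tail_bound (w : edge V -> R)
  (w_summable : bound (finite_subsum w (fun _ => True))) K M d :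
  (K <= M)%nat -> set_sum w (fun x => (K < psi x)%nat) <= d ->
  0 <= set_sum w (even_tail M) <= d.
Proof.
  intros HK Hsmall. split; [exact (set_sum_nonneg w w_summable _)|].
  eapply Rle_trans; [|exact Hsmall]. apply (set_sum_mono w w_summable).
  intros x [Hx _]. lia.
Qed.

Lemma gprime_symdiff_point_even_tail : psi_bijection psi ->
  forall (G : graph V) b N e M, const_beyond G b N -> (psi e <= M)%nat ->
  gprime (symdiff G (fun x => x = e \/ even_tail M x)).
Proof.
  intros hpsi G b N e M HG HeM. apply (gprime_symdiff G _ b N HG); intros K.
  - destruct (index_parity_unbounded hpsi true (Nat.max K M)) as [x [Hx Kx]].
    exists x. split; [right; split; [lia|exact Hx]|lia].
  - destruct (index_parity_unbounded hpsi false (Nat.max K M)) as [x [Hx Kx]].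
    exists x. split; [|lia]. intros [Hxe|[_ Hx']]; [subst x; lia|congruence].
Qed.

End EdgeIndex.

Lemma set_sum_toggle {V : Type} (w : edge V -> R)
  (w_summable : bound (finite_subsum w (fun _ => True))) (A B S : graph V) b :
  (forall e, B e <-> symdiff A S e) -> (forall e, S e -> (A e <-> b = true)) ->
  set_sum w B - set_sum w A = signed b (set_sum w S).
Proof.
  intros HB HS. unfold symdiff in HB.
  destruct b; simpl.
  - rewrite (set_sum_add w w_summable B S A); [lra| |].
    + intros e Be Se. specialize (HB e). specialize (HS e Se). tauto.
    + intros e. specialize (HB e). destruct (classic (S e)) as [Se|nSe];
        [specialize (HS e Se)|]; intuition.
  - rewrite (set_sum_add w w_summable A S B); [lra| |].
    + intros e Ae Se. specialize (HS e Se). intuition discriminate.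
    + intros e. specialize (HB e). destruct (classic (S e)) as [Se|nSe];
        [specialize (HS e Se)|]; intuition discriminate.
Qed.

Section Derivative.
Context {V : Type} (psi : edge V -> nat) (hpsi : psi_bijection psi)
  (G0 : graph V) (phi : edge V -> R) (hphi : l1_plus phi).

Lemma difference_quotient_eq (G G1 : graph V) bG bD N :
  const_beyond psi G bG N -> const_beyond psi (symdiff G G0) bD N ->
  (forall e, (psi e <= N)%nat -> (G1 e <-> G e)) ->
  (d_phi phi G0 G1 - d_phi phi G0 G) / (norm_psi2 psi G1 - norm_psi2 psi G) =
  signed (xorb bD bG)
    (set_sum phi (symdiff G1 G) / set_sum (psi_weight psi) (symdiff G1 G)).
Proof.
  intros HG HD Hagree.
  assert (Hbig : forall e, symdiff G1 G e -> (N < psi e)%nat).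
  { intros e Se. destruct (Compare_dec.le_lt_dec (psi e) N) as [Hle|]; [|assumption].
    specialize (Hagree e Hle). unfold symdiff in Se. tauto. }
  unfold d_phi, norm_psi2; fold (psi_weight psi). rewrite <- signed_div.
  rewrite (set_sum_toggle phi (proj2 hphi) (symdiff G0 G) (symdiff G0 G1) (symdiff G1 G) bD).
  - rewrite (set_sum_toggle (psi_weight psi) (psi_weight_summable psi (proj1 hpsi))
      G G1 (symdiff G1 G) bG); [reflexivity| |].
    + intros e. unfold symdiff. destruct (classic (G e)), (classic (G1 e)); tauto.
    + intros e Se. exact (HG e (Hbig e Se)).
  - intros e. unfold symdiff. destruct (classic (G0 e)), (classic (G e)), (classic (G1 e)); tauto.
  - intros e Se. rewrite <- (HD e (Hbig e Se)). unfold symdiff. tauto.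
Qed.

Lemma has_deriv_of_psi_limit c (G : graph V) bG bD :
  psi_limit psi phi c ->
  eventually_const psi G bG -> eventually_const psi (symdiff G G0) bD ->
  has_deriv psi (fun G => d_phi phi G0 G) G (signed (xorb bD bG) c).
Proof.
  intros Hc HG HD eps Heps.
  destruct (const_beyond_common psi _ _ bG bD HG HD) as [N [HGN HDN]].
  destruct (Hc (eps / 2)) as [Nc HNc]; [lra|].
  destruct (finite_psi_le psi hpsi (Nat.max Nc N)) as [l Hl].
  exists l. intros G1 _ Hne Hagree.
  assert (Hbig : forall e, symdiff G1 G e -> (Nat.max Nc N < psi e)%nat).
  { intros e Se. destruct (Compare_dec.le_lt_dec (psi e) (Nat.max Nc N)) as [Hle|]; [|assumption].
    specialize (Hagree e (Hl e Hle)). unfold symdiff in Se. tauto. }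
  rewrite (difference_quotient_eq G G1 bG bD N HGN HDN).
  - rewrite Rabs_signed_sub_signed.
    assert (HS : exists a, symdiff G1 G a).
    { apply NNPP. intros Hno. apply Hne. intros e. unfold symdiff in Hno.
      destruct (classic (G1 e)), (classic (G e)); firstorder. }
    destruct HS as [a Sa].
    apply Rle_lt_trans with (eps / 2); [|lra].
    apply (set_sum_ratio_near _ _ (proj1 hphi) (psi_weight_pos psi) (proj2 hphi)
             (psi_weight_summable psi (proj1 hpsi)) _ a); [exact Sa|].
    intros e Se. unfold psi_weight.
    replace (phi e / / 2 ^ psi e) with (2 ^ psi e * phi e) by (field; apply pow_nonzero; lra).
    left. apply (HNc (psi e) e); [specialize (Hbig e Se); lia|reflexivity].
  - intros e He. apply Hagree, Hl. lia.
Qed.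

Lemma test_graph_quotient (G : graph V) bG bD N e M :
  const_beyond psi G bG N -> const_beyond psi (symdiff G G0) bD N ->
  (N < psi e)%nat -> (psi e <= M)%nat ->
  let G1 := symdiff G (fun x => x = e \/ even_tail psi M x) in
  (d_phi phi G0 G1 - d_phi phi G0 G) / (norm_psi2 psi G1 - norm_psi2 psi G) =
  signed (xorb bD bG)
    ((phi e + set_sum phi (even_tail psi M)) /
     (psi_weight psi e + set_sum (psi_weight psi) (even_tail psi M))).
Proof.
  intros HG HD HNe HeM G1.
  set (S := fun x => x = e \/ even_tail psi M x).
  assert (HS : forall x, symdiff G1 G x <-> S x).
  { intros x. unfold G1, S, symdiff.
    destruct (classic (G x)), (classic (x = e \/ even_tail psi M x)); tauto. }
  assert (Hsum : forall w, (forall x, 0 < w x) -> bound (finite_subsum w (fun _ => True)) ->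
            set_sum w (symdiff G1 G) = w e + set_sum w (even_tail psi M)).
  { intros w Hwpos Hw. rewrite (set_sum_ext w Hw _ S HS).
    apply (set_sum_add_point w Hwpos Hw). intros [HMe _]. lia. }
  rewrite (difference_quotient_eq G G1 bG bD N HG HD), (Hsum phi (proj1 hphi) (proj2 hphi)),
    (Hsum _ (psi_weight_pos psi) (psi_weight_summable psi (proj1 hpsi))); [reflexivity|].
  intros x Hx. unfold G1, symdiff, even_tail.
  assert (x <> e) by (intros ->; lia). intuition lia.
Qed.

Lemma psi_limit_of_has_deriv (G : graph V) bG bD L :
  eventually_const psi G bG -> eventually_const psi (symdiff G G0) bD ->
  has_deriv psi (fun G => d_phi phi G0 G) G L ->
  psi_limit psi phi (signed (xorb bD bG) L).
Proof.
  intros HG HD Hd eps Heps.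
  destruct (const_beyond_common psi _ _ bG bD HG HD) as [N [HGN HDN]].
  destruct (Hd (eps / 2)) as [l Hl]; [lra|].
  exists (S (Nat.max (max_index psi l) N)). intros n e Hn He.
  pose proof (psi_weight_pos psi e) as Hwe. pose proof (proj1 hphi e) as Hphie.
  pose proof (psi_weight_summable psi (proj1 hpsi)) as Hwsum.
  destruct (ratio_perturb_small (phi e) (psi_weight psi e) (eps / 4)) as [d [Hd0 Hclose]];
    [lra|lra|lra|].
  destruct (set_sum_tail_small phi (proj2 hphi) psi d Hd0) as [M1 HM1].
  destruct (set_sum_tail_small (psi_weight psi) Hwsum psi d Hd0) as [M2 HM2].
  set (M := Nat.max (Nat.max M1 M2) n).
  set (G1 := symdiff G (fun x => x = e \/ even_tail psi M x)).
  assert (Hne : ~ (forall x, G1 x <-> G x))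
    by (intros H; specialize (H e); unfold G1, symdiff in H; tauto).
  assert (Hagree : forall x, In x l -> (G1 x <-> G x)).
  { intros x Hx. pose proof (le_max_index psi l x Hx).
    unfold G1, symdiff, even_tail. assert (x <> e) by (intros ->; lia).
    unfold M in *. intuition lia. }
  specialize (Hl G1 (gprime_symdiff_point_even_tail psi hpsi G bG N e M HGN ltac:(lia)) Hne Hagree).
  unfold G1 in Hl.
  rewrite (test_graph_quotient G bG bD N e M HGN HDN), Rabs_signed_sub in Hl by lia.
  specialize (Hclose _ _ (set_sum_even_tail_bound psi phi (proj2 hphi) M1 M d ltac:(lia) HM1)
                        (set_sum_even_tail_bound psi _ Hwsum M2 M d ltac:(lia) HM2)).
  replace (2 ^ n * phi e) with (phi e / psi_weight psi e)
    by (unfold psi_weight; rewrite He; field; apply pow_nonzero; lra).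
  rewrite Rabs_minus_sym in Hclose.
  set (q := (phi e + set_sum phi (even_tail psi M)) /
              (psi_weight psi e + set_sum (psi_weight psi) (even_tail psi M))) in *.
  set (q0 := phi e / psi_weight psi e) in *.
  apply Rle_lt_trans with (Rabs (q0 - q) + Rabs (q - signed (xorb bD bG) L)); [|lra].
  replace (q0 - signed (xorb bD bG) L) with ((q0 - q) + (q - signed (xorb bD bG) L)) by ring.
  apply Rabs_triang.
Qed.

End Derivative.

Lemma exists_proper_graph_near {V : Type} (psi : edge V -> nat) (G0 : graph V) :
  psi_bijection psi ->
  exists G, nonempty_graph G /\ nonfull_graph G /\ fin_graph (symdiff G G0).
Proof.
  intros [_ [_ Hsurj]].
  destruct (Hsurj 1%nat) as [e1 He1]; [lia|]. destruct (Hsurj 2%nat) as [e2 He2]; [lia|].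
  assert (Hne : e1 <> e2) by (intros ->; lia).
  exists (fun e => e = e1 \/ (G0 e /\ e <> e2)). repeat split.
  - exists e1. left; reflexivity.
  - exists e2. intros [->|[_ H]]; auto.
  - exists (e1 :: e2 :: nil). intros e He. unfold symdiff in He.
    destruct (classic (e = e1)) as [->|]; [left; reflexivity|].
    destruct (classic (e = e2)) as [->|]; [right; left; reflexivity|]. tauto.
Qed.

Theorem proposition3p7 (V : Type) (hV : countably_infinite V)
  (psi : edge V -> nat) (hpsi : psi_bijection psi)
  (G0 : graph V) (hG0 : fin_graph G0 \/ cofin_graph G0)
  (phi : edge V -> R) (hphi : l1_plus phi) :
  let f := fun G : graph V => d_phi phi G0 G in
  ((exists c, psi_limit psi phi c) <->
   (exists G : graph V, nonempty_graph G /\ nonfull_graph G /\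
      (fin_graph (symdiff G G0) \/ cofin_graph (symdiff G G0)) /\
      exists L, has_deriv psi f G L)) /\
  (forall c, psi_limit psi phi c ->
   forall G : graph V, nonempty_graph G -> nonfull_graph G ->
      (fin_graph (symdiff G G0) \/ cofin_graph (symdiff G G0)) ->
      (((fin_graph G /\ fin_graph (symdiff G G0)) \/
        (cofin_graph G /\ cofin_graph (symdiff G G0))) -> has_deriv psi f G c) /\
      (((fin_graph G /\ cofin_graph (symdiff G G0)) \/
        (cofin_graph G /\ fin_graph (symdiff G G0))) -> has_deriv psi f G (- c))).
Proof.
  intros f; subst f.
  destruct (eventually_const_of_fin_or_cofin psi G0 hG0) as [b0 H0].
  split; [split|].
  - intros [c Hc].
    destruct (exists_proper_graph_near psi G0 hpsi) as [G [HGne [HGnf HD]]].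
    exists G. repeat split; auto. eexists.
    apply (has_deriv_of_psi_limit psi hpsi G0 phi hphi c G (xorb false b0) false Hc);
      [apply (eventually_const_of_symdiff psi G G0)|]; auto using eventually_const_of_fin.
  - intros [G [_ [_ [HD [L HL]]]]].
    destruct (eventually_const_of_fin_or_cofin psi _ HD) as [bD HbD].
    eexists. apply (psi_limit_of_has_deriv psi hpsi G0 phi hphi G (xorb bD b0) bD L); auto.
    exact (eventually_const_of_symdiff psi G G0 bD b0 HbD H0).
  - intros c Hc G _ _ _. split; intros [[HG HD]|[HG HD]];
      [apply (has_deriv_of_psi_limit psi hpsi G0 phi hphi c G false false)
      |apply (has_deriv_of_psi_limit psi hpsi G0 phi hphi c G true true)
      |apply (has_deriv_of_psi_limit psi hpsi G0 phi hphi c G false true)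
      |apply (has_deriv_of_psi_limit psi hpsi G0 phi hphi c G true false)];
      auto using eventually_const_of_fin, eventually_const_of_cofin.
Qed.
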